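(* Let $\Omega_0\subseteq\mathbb{R}^{p+1}$ be a domain and $A_0,A_1\in C^{\omega}(\Omega_0,\mathbb{A})$. Then $$GCK[A_0]=HGCK[A_0,0]+\frac1q\,HGCK[0,D_{\mathbf{x}_p}A_0],$$ and $$HGCK[A_0,A_1]=\mathcal{PE}\big[GCK[A_0]\big]+q\,\mathcal{PO}\big[GCK[f_0]\big],$$ where $f_0\in C^\omega(\Omega_0,\mathbb{A})$ is a solution of $D_{\mathbf{x}_p}f_0=A_1$, if it exists (identities holding where all terms are defined).
   Context: Let $\mathbb{A}$ be a real alternative algebra (the associator $[a,b,c]=(ab)c-a(bc)$ is an alternating trilinear function) with unity $1$, of finite real dimension $d>1$, equipped with an anti-involution $a\mapsto a^c$ (real linear, $a^c=a$ for real $a$, $(a^c)^c=a$, $(ab)^c=b^ca^c$). Let $t(x)=x+x^c$, $n(x)=xx^c$, $\mathbb{S}_{\mathbb{A}}=\{x: t(x)=0,\ n(x)=1\}$ (assumed nonempty) and $Q_{\mathbb{A}}=\mathbb{R}\cup\{x: t(x)\in\mathbb{R},\ n(x)\in\mathbb{R},\ 4n(x)>t(x)^2\}$. Let $M$ be a real subspace with $\mathbb{R}\subsetneq M\subseteq Q_{\mathbb{A}}$ having a basis $(v_0,\dots,v_m)$, $m\ge1$, $v_0=1$, $v_s\in\mathbb{S}_{\mathbb{A}}$, $v_sv_t=-v_tv_s$ for distinct $s,t\ge1$; complete it to a basis of $\mathbb{A}$ with associated Euclidean norm. Identify $x=\sum x_sv_s\in M$ with $(x_0,\dots,x_m)\in\mathbb{R}^{m+1}$;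 differentiate componentwise; $C^\omega$ = componentwise real analytic. Fix $p\in\{0,\dots,m-1\}$, $q=m-p$; $\mathbf{x}=\mathbf{x}_p+\underline{\mathbf{x}}_q$ with $\mathbf{x}_p=\sum_{s=0}^px_sv_s\in\mathbb{R}^{p+1}$, $\underline{\mathbf{x}}_q=\sum_{s=p+1}^m x_sv_s$; $r=|\underline{\mathbf{x}}_q|$. $D_{\mathbf{x}_p}f=\sum_{s=0}^p v_s\partial_{x_s}f$, $\Delta_{\mathbf{x}_p}=\sum_{s=0}^p\partial_{x_s}^2$. With $\mathbf{x}_\diamond=\mathbf{x}_p-\underline{\mathbf{x}}_q$: $\mathcal{PE}[h](\mathbf{x})=\frac12(h(\mathbf{x})+h(\mathbf{x}_\diamond))$, $\mathcal{PO}[h](\mathbf{x})=\frac12(h(\mathbf{x})-h(\mathbf{x}_\diamond))$. The monogenic generalized CK-extension of real analytic $g$ on $\Omega_0$ is $GCK[g](\mathbf{x})=\sum_{k\ge0}\frac{\Gamma(\frac q2)(-1)^kr^{2k}}{2^{2k}k!\Gamma(k+\frac q2)}\Delta_{\mathbf{x}_p}^kg(\mathbf{x}_p)+\underline{\mathbf{x}}_q\sum_{k\ge0}\frac{\Gamma(\frac q2)(-1)^kr^{2k}}{2^{2k+1}k!\Gamma(k+\frac q2+1)}\Delta_{\mathbf{x}_p}^k(D_{\mathbf{x}_p}g(\mathbf{x}_p))$, the unique function of the form $\sum_k\underline{\mathbf{x}}_q^kA_k(\mathbf{x}_p)$ ($A_k$ real analytic, $A_0=g$) which is monogenic ($\sum_{s=0}^mv_s\partial_{x_s}f=0$)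 on a p-symmetric neighbourhood of $\Omega_0$; the harmonic generalized CK-extension of $(A_0,A_1)$ is $HGCK[A_0,A_1](\mathbf{x})=\sum_{k\ge0}\frac{\Gamma(\frac q2)(-1)^kr^{2k}}{2^{2k}k!\Gamma(k+\frac q2)}\Delta_{\mathbf{x}_p}^kA_0(\mathbf{x}_p)+\underline{\mathbf{x}}_q\sum_{k\ge0}\frac{\Gamma(\frac q2+1)(-1)^kr^{2k}}{2^{2k}k!\Gamma(k+\frac q2+1)}\Delta_{\mathbf{x}_p}^kA_1(\mathbf{x}_p)$, the unique function of the form $\sum_k\underline{\mathbf{x}}_q^kA_k(\mathbf{x}_p)$ with the given $A_0,A_1$ which is harmonic there. *)

From HB Require Import structures.
From mathcomp Require Import all_boot all_order all_algebra.
From mathcomp Require Import all_classical all_reals all_analysis.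
Set Implicit Arguments. Unset Strict Implicit. Unset Printing Implicit Defensive.
Import Order.TTheory GRing.Theory Num.Theory.
Import numFieldNormedType.Exports.
Local Open Scope classical_set_scope.
Local Open Scope ring_scope.

(* ---------- The real algebra A, modelled as R^d with coordinates in a fixed
   basis, with product [mul], unity [one] and anti-involution [conj]. ---------- *)
Section Algebra.
Variables (R : realType) (d : nat).
Local Notation A := 'rV[R]_d.
Variables (mul : A -> A -> A) (one : A) (conj : A -> A).

Definition associator (a b c : A) : A := mul (mul a b) c - mul a (mul b c).

Definition alt_algebra : Prop :=
  [/\ (forall (k : R) a b c, mul (k *: a + b) c = k *: mul a c + mul b c),
      (forall (k : R) a b c, mul a (k *: b + c) = k *: mul a b + mul a c),
      (forall a, mul one a = a /\ mul a one = a) &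
      (forall a b, [/\ associator a a b = 0, associator a b a = 0 &
                       associator b a a = 0])].

Definition is_real_elt (x : A) : Prop := exists c : R, x = c *: one.

Definition anti_involution : Prop :=
  [/\ (forall (k : R) a b, conj (k *: a + b) = k *: conj a + conj b),
      (forall c : R, conj (c *: one) = c *: one),
      (forall a, conj (conj a) = a) &
      (forall a b, conj (mul a b) = mul (conj b) (conj a))].

Definition trc (x : A) : A := x + conj x.
Definition nrm (x : A) : A := mul x (conj x).

Definition in_SA (x : A) : Prop := trc x = 0 /\ nrm x = one.

Definition in_QA (x : A) : Prop :=
  is_real_elt x \/
  exists t n : R, [/\ trc x = t *: one, nrm x = n *: one & t ^+ 2 < 4 * n].

Definition lin_indep (m : nat) (v : 'I_m -> A) : Prop :=
  forall c : 'I_m -> R, \sum_(s < m) c s *: v s = 0 -> forall s, c s = 0.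
End Algebra.

(* ---------- Euler--Gauss limit definition of the Gamma function (z > 0):
   Gamma z = lim_n n! n^z / (z (z+1) ... (z+n)). ---------- *)
Definition Gamma (R : realType) (z : R) : R :=
  limn (fun n : nat => n`!%:R * (n%:R `^ z) / \prod_(j < n.+1) (z + j%:R)).

Section Analytic.
Variables (R : realType).

(* homogeneous part of degree N of the power series with coefficients c at h *)
Definition homog_part (n N : nat) (c : ('I_n -> nat) -> R) (h : 'rV[R]_n) : R :=
  \sum_(a : {ffun 'I_n -> 'I_N.+1} | (\sum_i (a i : nat) == N)%N)
     c (fun i => (a i : nat)) * \prod_i h ord0 i ^+ a i.

Definition ranalytic_at (n : nat) (g : 'rV[R]_n -> R) (x0 : 'rV[R]_n) : Prop :=
  exists (c : ('I_n -> nat) -> R) (rho : R), 0 < rho /\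
    forall h : 'rV[R]_n, `|h| < rho ->
      cvgn (series (fun N => homog_part N (fun a => `|c a|) (map_mx Num.norm h)))
      /\ g (x0 + h) = limn (series (fun N => homog_part N c h)).

(* C^omega(Omega, A): componentwise real analytic on Omega *)
Definition analytic_on (n d : nat) (Omega : set 'rV[R]_n) (f : 'rV[R]_n -> 'rV[R]_d)
  : Prop :=
  forall x0, Omega x0 -> forall i : 'I_d, ranalytic_at (fun x => f x ord0 i) x0.

Definition domain (n : nat) (Omega : set 'rV[R]_n) : Prop :=
  [/\ Omega !=set0, open Omega & connected Omega].
End Analytic.

Section CK.
Variables (R : realType) (d m p : nat).
Local Notation A := 'rV[R]_d.
Variables (mul : A -> A -> A) (v : 'I_m.+1 -> A).
(* points x = x_p + underline x_q of R^{m+1} are given as pairs (xp, y) with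
   xp in R^{p+1} (coordinates x_0..x_p) and y in R^q (coordinates
   x_{p+1}..x_m), q = m - p *)
Local Notation q := (m - p)%N.

Definition qR : R := q%:R.

(* underline x_q = sum_{s=p+1}^m x_s v_s *)
Definition xq (y : 'rV[R]_q) : A := \sum_(j < q) y ord0 j *: v (inord (p.+1 + j)).

(* r = |underline x_q| (Euclidean norm associated with the basis) *)
Definition rad (y : 'rV[R]_q) : R := Num.sqrt (\sum_(j < q) y ord0 j ^+ 2).

Definition part (s : 'I_p.+1) (f : 'rV[R]_p.+1 -> A) : 'rV[R]_p.+1 -> A :=
  'D_(delta_mx ord0 s) f.

Definition Dxp (f : 'rV[R]_p.+1 -> A) : 'rV[R]_p.+1 -> A :=
  fun x => \sum_(s < p.+1) mul (v (inord s)) (part s f x).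

Definition lap (f : 'rV[R]_p.+1 -> A) : 'rV[R]_p.+1 -> A :=
  fun x => \sum_(s < p.+1) part s (part s f) x.

Definition coef_even (k : nat) (r : R) : R :=
  Gamma (qR / 2) * (-1) ^+ k * r ^+ (2 * k) /
  (2 ^+ (2 * k) * k`!%:R * Gamma (k%:R + qR / 2)).
Definition coef_odd (k : nat) (r : R) : R :=
  Gamma (qR / 2) * (-1) ^+ k * r ^+ (2 * k) /
  (2 ^+ (2 * k + 1) * k`!%:R * Gamma (k%:R + qR / 2 + 1)).
Definition coef_hodd (k : nat) (r : R) : R :=
  Gamma (qR / 2 + 1) * (-1) ^+ k * r ^+ (2 * k) /
  (2 ^+ (2 * k) * k`!%:R * Gamma (k%:R + qR / 2 + 1)).

Definition ser_even (g : 'rV[R]_p.+1 -> A) xp y :=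
  series (fun k => coef_even k (rad y) *: iter k lap g xp).
Definition ser_odd (g : 'rV[R]_p.+1 -> A) xp y :=
  series (fun k => coef_odd k (rad y) *: iter k lap (Dxp g) xp).
Definition ser_hodd (A1 : 'rV[R]_p.+1 -> A) xp y :=
  series (fun k => coef_hodd k (rad y) *: iter k lap A1 xp).

Definition GCK (g : 'rV[R]_p.+1 -> A) xp y : A :=
  limn (ser_even g xp y) + mul (xq y) (limn (ser_odd g xp y)).
Definition GCK_def (g : 'rV[R]_p.+1 -> A) xp y : Prop :=
  cvgn (ser_even g xp y) /\ cvgn (ser_odd g xp y).

Definition HGCK (A0 A1 : 'rV[R]_p.+1 -> A) xp y : A :=
  limn (ser_even A0 xp y) + mul (xq y) (limn (ser_hodd A1 xp y)).
Definition HGCK_def (A0 A1 : 'rV[R]_p.+1 -> A) xp y : Prop :=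
  cvgn (ser_even A0 xp y) /\ cvgn (ser_hodd A1 xp y).

(* x_diamond = x_p - underline x_q corresponds to (xp, -y) *)
Definition PE (h : 'rV[R]_p.+1 -> 'rV[R]_q -> A) xp y : A :=
  2^-1 *: (h xp y + h xp (- y)).
Definition PO (h : 'rV[R]_p.+1 -> 'rV[R]_q -> A) xp y : A :=
  2^-1 *: (h xp y - h xp (- y)).
End CK.

(** Both identities are comparisons of the coefficients of the series
    defining the extensions.  The odd coefficients of GCK and HGCK differ by
    exactly the factor [q], because [Gamma (q/2 + 1) = q/2 * Gamma (q/2)]; as
    [Gamma] is Euler's limit, this needs that limit to exist at the
    half-integers, which follows from its explicit value at [1], monotonicity
    at [1/2], and the shift relation.  For the second identity, [r] is even in
    [y] while [x_q] is odd and the product is bilinear, so [PE] keeps the even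
    part of [GCK[A0]] and [PO] the [x_q]-part of [GCK[f0]]; since the
    Laplacian is local, [D f0 = A1] on the open set [Omega0] turns the latter
    into [1/q] times the odd part of [HGCK[A0, A1]]. *)
From Pilot Require Import Defs.
From HB Require Import structures.
From mathcomp Require Import all_boot all_order all_algebra.
From mathcomp Require Import all_classical all_reals all_analysis.
From mathcomp Require Import ring lra.
Import Order.TTheory GRing.Theory Num.Theory.
Import numFieldNormedType.Exports.
Local Open Scope classical_set_scope.
Local Open Scope ring_scope.
Set Implicit Arguments.
Unset Strict Implicit.

Section EulerGamma.
Variable R : realType.

Lemma natr_div_addl_cvg1 (c : R) : 0 < c ->
  (n%:R / (c + n%:R)) @[n --> \oo] --> (1 : R).
Proof.
move=> c0.
apply: (@squeeze_cvgr _ _ _ _ (fun n => 1 - (c + 1) * harmonic n) (fun=> 1)).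
- apply: nearW => n /=.
  have cn0 : 0 < c + n%:R by rewrite ltr_wpDr.
  apply/andP; split; last by rewrite ler_pdivrMr // mul1r lerDr ltW.
  have -> : n%:R / (c + n%:R) = 1 - c / (c + n%:R) by field; rewrite gt_eqF.
  rewrite lerD2l lerN2 ler_pdivrMr // mulrAC ler_pdivlMr //.
  rewrite -natr1; have := ler0n R n; nra.
- rewrite -[X in _ --> X](subr0 (1 : R)) -[X in _ - X](mulr0 (c + 1)).
  by apply: cvgB; [exact: cvg_cst | exact: cvgMl_tmp cvg_harmonic].
- exact: cvg_cst.
Qed.

Definition gamma_seq (z : R) (n : nat) : R :=
  n`!%:R * (n%:R `^ z) / \prod_(j < n.+1) (z + j%:R).

Lemma gamma_prod_gt0 (z : R) n : 0 < z -> 0 < \prod_(j < n.+1) (z + j%:R).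
Proof. by move=> z0; apply: prodr_gt0 => j _; rewrite ltr_wpDr. Qed.

Lemma gamma_seqD1 (z : R) n : 0 < z ->
  gamma_seq (z + 1) n = z * gamma_seq z n * (n%:R / (z + 1 + n%:R)).
Proof.
move=> z0.
have prodD1 k : \prod_(j < k.+1) (z + 1 + j%:R) * z =
                \prod_(j < k.+1) (z + j%:R) * (z + 1 + k%:R).
  elim: k => [|k IHk]; first by rewrite !big_ord1 /=; ring.
  by rewrite big_ord_recr /= [in RHS]big_ord_recr /= mulrAC IHk -natr1; ring.
have zn0 : 0 < z + 1 + n%:R by rewrite ltr_wpDr // ltr_wpDr.
rewrite /gamma_seq powRD ?powRr1 //; last by rewrite implybE gt_eqF ?ltr_wpDr.
have -> : \prod_(j < n.+1) (z + 1 + j%:R) =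
          \prod_(j < n.+1) (z + j%:R) * (z + 1 + n%:R) / z.
  by rewrite -prodD1 mulfK // gt_eqF.
by field; rewrite !gt_eqF // gamma_prod_gt0.
Qed.

Lemma gamma_seqD1_cvg (z l : R) : 0 < z ->
  gamma_seq z @ \oo --> l -> gamma_seq (z + 1) @ \oo --> z * l.
Proof.
move=> z0 zl.
rewrite (funext (fun n => gamma_seqD1 n z0)) -[X in _ --> X]mulr1.
apply: cvgM; first exact: cvgMl_tmp.
by apply: natr_div_addl_cvg1; rewrite ltr_wpDr.
Qed.

Lemma GammaD1 (z : R) : 0 < z -> cvgn (gamma_seq z) ->
  Gamma (z + 1) = z * Gamma z.
Proof.
move=> z0 /cvg_ex[l zl].
rewrite /Gamma -/(gamma_seq z) -/(gamma_seq (z + 1)).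
have zl1 := gamma_seqD1_cvg z0 zl.
by rewrite (cvg_lim (@Rhausdorff R) zl) (cvg_lim (@Rhausdorff R) zl1).
Qed.

Lemma gamma_seq1_cvg : gamma_seq 1 @ \oo --> (1 : R).
Proof.
have prod1 n : \prod_(j < n.+1) (1 + j%:R) = n.+1`!%:R :> R.
  elim: n => [|n IHn]; first by rewrite big_ord1 addr0.
  by rewrite big_ord_recr /= IHn (factS n.+1) natrM mulrC -[n.+2]add1n natrD.
suff -> : gamma_seq 1 = fun n => n%:R / (1 + n%:R) by exact: natr_div_addl_cvg1.
apply: funext => n; rewrite /gamma_seq powRr1 // prod1 factS natrM -add1n natrD.
by field; rewrite !gt_eqF // ?ltr0n ?fact_gt0 // ltr_wpDr.
Qed.

(* Up to the factor [n / (n + 1)], [gamma_seq (1/2) n ^+ 2] is the sequence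
   [c] below, which is nonincreasing since [(n + 1)(n + 2) <= (n + 3/2)^2]. *)
Lemma gamma_seq_half_cvg : cvgn (gamma_seq 2^-1).
Proof.
set z : R := 2^-1; have z0 : 0 < z by rewrite invr_gt0.
pose c n := n`!%:R ^+ 2 * n.+1%:R / (\prod_(j < n.+1) (z + j%:R)) ^+ 2.
have c_ge0 n : 0 <= c n by rewrite divr_ge0 ?sqr_ge0 // mulr_ge0 ?sqr_ge0.
have c_noninc : nonincreasing_seq c.
  apply/nonincreasing_seqP => n; have zP := gamma_prod_gt0 n z0.
  have -> : c n.+1 = c n * (n.+1%:R * n.+2%:R / (z + n.+1%:R) ^+ 2).
    by rewrite /c big_ord_recr /= factS natrM; field; rewrite !gt_eqF // ltr_wpDr.
  apply: ler_piMr => //; rewrite ler_pdivrMr ?exprn_gt0 ?ltr_wpDr // mul1r.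
  have z2 : 2 * z * (n%:R + 1) = n%:R + 1 by rewrite /z divff ?mul1r.
  by rewrite -!natr1; have := sqr_ge0 z; nra.
have /cvg_ex[l cl] : cvgn c.
  by apply: nonincreasing_is_cvgn => //; exists 0 => _ [n _ <-].
have -> : gamma_seq z = Num.sqrt \o (fun n => c n * (n%:R / (1 + n%:R))).
  apply: funext => n /=; have zP := gamma_prod_gt0 n z0.
  have g_ge0 : 0 <= gamma_seq z n by rewrite divr_ge0 ?mulr_ge0 ?powR_ge0 ?ltW.
  rewrite -[LHS](ger0_norm g_ge0) -sqrtr_sqr /gamma_seq /c powR12_sqrt //.
  by rewrite !exprMn sqr_sqrtr //; congr Num.sqrt; field; rewrite !gt_eqF // ltr_wpDr.
apply/cvg_ex; exists (Num.sqrt (l * 1)).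
apply: continuous_cvg; first exact: sqrt_continuous.
by apply: cvgM; [exact: cl | exact: natr_div_addl_cvg1].
Qed.

Lemma gamma_seq_half_nat_cvg k : (0 < k)%N -> cvgn (gamma_seq (k%:R / 2)).
Proof.
suff half_cvg n : cvgn (gamma_seq (n.+1%:R / 2)) /\ cvgn (gamma_seq (n.+2%:R / 2)).
  by case: k => // k _; case: (half_cvg k).
elim: n => [|n [IHn1 IHn2]].
  split; first by rewrite mul1r; exact: gamma_seq_half_cvg.
  by rewrite divff ?pnatr_eq0 //; apply/cvg_ex; exists 1; exact: gamma_seq1_cvg.
split; first exact: IHn2.
move/cvg_ex: IHn1 => [l nl]; apply/cvg_ex; exists (n.+1%:R / 2 * l).
have -> : n.+3%:R / 2 = n.+1%:R / 2 + 1 :> R.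
  by rewrite -[n.+3]addn2 natrD mulrDl divff ?pnatr_eq0.
by apply: gamma_seqD1_cvg; rewrite ?divr_gt0.
Qed.

Lemma Gamma_half_natD1 k : (0 < k)%N ->
  Gamma (k%:R / 2 + 1 : R) = k%:R / 2 * Gamma (k%:R / 2).
Proof.
move=> k0; apply: GammaD1; last exact: gamma_seq_half_nat_cvg.
by rewrite divr_gt0 // ltr0n.
Qed.

End EulerGamma.

Section BilinearProduct.
Variables (K : pzRingType) (V : lmodType K) (bmul : V -> V -> V).
Hypothesis bmul_linl : forall (k : K) a b c, bmul (k *: a + b) c = k *: bmul a c + bmul b c.
Hypothesis bmul_linr : forall (k : K) a b c, bmul a (k *: b + c) = k *: bmul a b + bmul a c.

Lemma bmul0r b : bmul 0 b = 0.
Proof.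
apply: (@addrI _ (bmul 0 b)); rewrite addr0.
by have := bmul_linl 1 0 0 b; rewrite !scale1r addr0.
Qed.

Lemma bmulr0 a : bmul a 0 = 0.
Proof.
apply: (@addrI _ (bmul a 0)); rewrite addr0.
by have := bmul_linr 1 a 0 0; rewrite !scale1r addr0.
Qed.

Lemma bmulrZ a (k : K) b : bmul a (k *: b) = k *: bmul a b.
Proof. by have := bmul_linr k a b 0; rewrite !addr0 bmulr0 addr0. Qed.

Lemma bmulNr a b : bmul (- a) b = - bmul a b.
Proof. by have := bmul_linl (-1) a 0 b; rewrite addr0 bmul0r addr0 !scaleN1r. Qed.

End BilinearProduct.

Section HalfSums.
Variables (F : numFieldType) (V : lmodType F).

Lemma half_add_addr_subr (a b : V) : 2^-1 *: ((a + b) + (a - b)) = a.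
Proof.
by rewrite addrACA subrr addr0 -mulr2n -[a *+ 2]scaler_nat scalerA mulVf ?scale1r //.
Qed.

Lemma half_add_subr_subr (a b : V) : 2^-1 *: ((a + b) - (a - b)) = b.
Proof.
by rewrite opprD opprK addrACA subrr add0r -mulr2n -[b *+ 2]scaler_nat scalerA mulVf ?scale1r //.
Qed.

End HalfSums.

Lemma derive_eq_on_open (R : numFieldType) (V W : normedModType R) (U : set V)
    (f g : V -> W) (w : V) :
  open U -> (forall x, U x -> f x = g x) -> forall x, U x -> 'D_w f x = 'D_w g x.
Proof.
move=> oU fg x Ux; apply: near_eq_derive.
by apply: filterS (open_nbhs_nbhs (conj oU Ux)) => z; exact: fg.
Qed.

Section CKExtensions.
Variables (R : realType) (d m p : nat).
Local Notation A := 'rV[R]_d.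
Local Notation Rp := 'rV[R]_p.+1.
Local Notation Rq := 'rV[R]_(m - p).
Local Notation q := (qR R m p).

Lemma lap_eq_on_open (U : set Rp) (f g : Rp -> A) :
  open U -> (forall x, U x -> f x = g x) -> forall x, U x -> lap f x = lap g x.
Proof.
move=> oU fg x Ux; apply: eq_bigr => s _; rewrite /part.
by apply: (derive_eq_on_open _ oU _ Ux) => z Uz; exact: derive_eq_on_open _ oU fg z Uz.
Qed.

Lemma iter_lap_eq_on_open (U : set Rp) (f g : Rp -> A) :
  open U -> (forall x, U x -> f x = g x) ->
  forall k x, U x -> iter k (@lap R d p) f x = iter k (@lap R d p) g x.
Proof.
move=> oU fg; elim=> [|k IHk] x Ux; first exact: fg.
by rewrite !iterS; exact: lap_eq_on_open oU IHk x Ux.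
Qed.

Lemma iter_lap0 k : iter k (@lap R d p) (fun=> 0) = fun=> 0.
Proof.
elim: k => [|k IHk] //; rewrite iterS IHk.
apply: funext => x; apply: big1 => s _.
by rewrite /part !(funext (fun x => derive_cst _ _ _)) derive_cst.
Qed.

Lemma limn_series_iter_lap0 (c : nat -> R) (xp : Rp) :
  limn (series (fun k => c k *: iter k (@lap R d p) (fun=> 0) xp)) = 0.
Proof.
have -> : series (fun k => c k *: iter k (@lap R d p) (fun=> 0) xp) = fun=> 0.
  by apply: funext => n; apply: big1 => k _; rewrite iter_lap0 scaler0.
exact: lim_cst.
Qed.

Lemma rad_opp (y : Rq) : Defs.rad (- y) = Defs.rad y.
Proof. by congr Num.sqrt; apply: eq_bigr => j _; rewrite mxE sqrrN. Qed.

Variables (mul : A -> A -> A) (v : 'I_m.+1 -> A).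

Lemma xq_opp (y : Rq) : xq v (- y) = - xq v y.
Proof. by rewrite /xq -sumrN; apply: eq_bigr => j _; rewrite mxE scaleNr. Qed.

Lemma ser_hodd_eq_on_open (U : set Rp) (f g : Rp -> A) xp (y : Rq) :
  open U -> (forall x, U x -> f x = g x) -> U xp ->
  ser_hodd (m := m) f xp y = ser_hodd g xp y.
Proof.
move=> oU fg Uxp; congr series; apply: funext => k.
by rewrite (iter_lap_eq_on_open oU fg k Uxp).
Qed.

Hypothesis p_lt_m : (p < m)%N.

Lemma coef_odd_hodd k r : coef_odd m p k r = q^-1 * coef_hodd m p k r.
Proof.
have q_gt0 : (0 < m - p)%N by rewrite subn_gt0.
have q_neq0 : q != 0 by rewrite pnatr_eq0 -lt0n.
rewrite /coef_odd /coef_hodd Gamma_half_natD1 // -/q addn1 exprS !invfM.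
set a := (Gamma _)^-1; set b := (k`!%:R)^-1; set c := (2 ^+ (2 * k))^-1.
by clearbody a b c; field.
Qed.

Lemma limn_ser_odd (g : Rp -> A) xp (y : Rq) :
  cvgn (ser_hodd (Dxp mul v g) xp y) ->
  limn (ser_odd mul v g xp y) = q^-1 *: limn (ser_hodd (Dxp mul v g) xp y).
Proof.
move=> hodd_cvg; rewrite -limZl_tmp // -seriesZ; congr (limn (series _)).
by apply: funext => k; rewrite coef_odd_hodd -scalerA.
Qed.

Hypothesis mul_linl : forall (k : R) a b c, mul (k *: a + b) c = k *: mul a c + mul b c.
Hypothesis mul_linr : forall (k : R) a b c, mul a (k *: b + c) = k *: mul a b + mul a c.

Lemma GCK_HGCK_split (g : Rp -> A) xp (y : Rq) :
  cvgn (ser_hodd (Dxp mul v g) xp y) ->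
  GCK mul v g xp y =
    HGCK mul v g (fun=> 0) xp y + q^-1 *: HGCK mul v (fun=> 0) (Dxp mul v g) xp y.
Proof.
move=> hodd_cvg; rewrite /GCK /HGCK limn_ser_odd // /ser_hodd /ser_even.
by rewrite !limn_series_iter_lap0 (bmulr0 mul_linr) (bmulrZ mul_linr) addr0 add0r.
Qed.

Lemma PE_GCK (g : Rp -> A) xp (y : Rq) :
  PE (GCK mul v g) xp y = limn (ser_even g xp y).
Proof.
rewrite /PE /GCK /ser_even /ser_odd rad_opp xq_opp (bmulNr mul_linl).
exact: half_add_addr_subr.
Qed.

Lemma PO_GCK (g : Rp -> A) xp (y : Rq) :
  PO (GCK mul v g) xp y = mul (xq v y) (limn (ser_odd mul v g xp y)).
Proof.
rewrite /PO /GCK /ser_even /ser_odd rad_opp xq_opp (bmulNr mul_linl).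
exact: half_add_subr_subr.
Qed.

Lemma HGCK_PE_PO (U : set Rp) (A0 A1 f0 : Rp -> A) xp (y : Rq) :
  open U -> (forall x, U x -> Dxp mul v f0 x = A1 x) -> U xp ->
  cvgn (ser_hodd A1 xp y) ->
  HGCK mul v A0 A1 xp y = PE (GCK mul v A0) xp y + q *: PO (GCK mul v f0) xp y.
Proof.
move=> oU Df0 Uxp hodd_cvg.
have hodd_f0 := ser_hodd_eq_on_open y oU Df0 Uxp.
rewrite PE_GCK PO_GCK limn_ser_odd ?hodd_f0 // (bmulrZ mul_linr) scalerA.
have q_neq0 : q != 0 by rewrite pnatr_eq0 -lt0n subn_gt0.
by rewrite mulfV // scale1r.
Qed.

End CKExtensions.

Theorem corollary3p17 (R : realType) (d m p : nat)
  (mul : 'rV[R]_d -> 'rV[R]_d -> 'rV[R]_d) (one : 'rV[R]_d)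
  (conj : 'rV[R]_d -> 'rV[R]_d) (v : 'I_m.+1 -> 'rV[R]_d)
  (Omega0 : set 'rV[R]_p.+1) (A0 A1 : 'rV[R]_p.+1 -> 'rV[R]_d) :
  (* A: real alternative algebra with unity, dimension d > 1, anti-involution *)
  alt_algebra mul one -> (1 < d)%N -> anti_involution mul one conj ->
  (exists x, in_SA mul one conj x) ->
  (* M = span(v_0, ..., v_m), m >= 1, R strictly inside M, M inside Q_A *)
  (1 <= m)%N -> lin_indep v -> v ord0 = one ->
  (forall s, s != ord0 -> in_SA mul one conj (v s)) ->
  (forall s t, s != ord0 -> t != ord0 -> s != t ->
     mul (v s) (v t) = - mul (v t) (v s)) ->
  (forall c : 'I_m.+1 -> R, in_QA mul one conj (\sum_(s < m.+1) c s *: v s)) ->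
  (* p in {0, ..., m-1}, q = m - p *)
  (p < m)%N ->
  domain Omega0 -> analytic_on Omega0 A0 -> analytic_on Omega0 A1 ->
  (* GCK[A0] = HGCK[A0,0] + (1/q) HGCK[0, D_{x_p} A0] *)
  (forall xp (y : 'rV[R]_(m - p)), Omega0 xp ->
     GCK_def mul v A0 xp y ->
     HGCK_def A0 (fun=> 0) xp y ->
     HGCK_def (fun=> 0) (Dxp mul v A0) xp y ->
     GCK mul v A0 xp y =
       HGCK mul v A0 (fun=> 0) xp y
       + (qR R m p)^-1 *: HGCK mul v (fun=> 0) (Dxp mul v A0) xp y)
  /\
  (* HGCK[A0,A1] = PE[GCK[A0]] + q PO[GCK[f0]] for analytic f0 with D f0 = A1 *)
  (forall f0 : 'rV[R]_p.+1 -> 'rV[R]_d,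
     analytic_on Omega0 f0 ->
     (forall xp, Omega0 xp -> Dxp mul v f0 xp = A1 xp) ->
     forall xp (y : 'rV[R]_(m - p)), Omega0 xp ->
       HGCK_def A0 A1 xp y ->
       GCK_def mul v A0 xp y -> GCK_def mul v A0 xp (- y) ->
       GCK_def mul v f0 xp y -> GCK_def mul v f0 xp (- y) ->
       HGCK mul v A0 A1 xp y =
         PE (GCK mul v A0) xp y + qR R m p *: PO (GCK mul v f0) xp y).
Proof.
move=> [mul_linl mul_linr _ _] _ _ _ _ _ _ _ _ _ p_lt_m [_ oOmega0 _] _ _.
split.
  move=> xp y _ _ _ [_ hodd_cvg].
  exact: GCK_HGCK_split.
move=> f0 _ Df0 xp y Omega0xp [_ hodd_cvg] _ _ _ _.
exact: HGCK_PE_PO oOmega0 Df0 Omega0xp hodd_cvg.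
Qed.
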